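(* In the situation of a path coalescing transformation, suppose in addition that $H$ is sub-additive, i.e. $H(A\cup B)\le H(A)+H(B)$ for all disjoint nonempty $A,B\subseteq X$. Then $\mathcal H(P')\le\mathcal H(P)$.
   Context: $X$ is a finite set and $H$ a real-valued function on nonempty subsets of $X$; write $H(a)=H(\{a\})$, $H(a,b)=H(\{a,b\})$; elements $a,b$ are combinatorially dependent if $H(a,b)<H(a)+H(b)$, independent otherwise. $G(X)$ is the complete undirected graph on $X$. A tour $P$ is a Hamiltonian cycle of $G(X)$ given as a directed cyclic sequence of all elements of $X$. $\mathcal S(P)$ is the set of maximal subpaths obtained by deleting from $P$ every edge whose endpoints are combinatorially independent; their vertex sets partition $X$, and $\mathcal H(P)=\sum_{Q\in\mathcal S(P)}H(V(Q))$, where $V(Q)$ is the vertex set of $Q$. A path coalescing transformation: $P_i=(u_0,\dots,u_k)$ and $P_j=(v_0,\dots,v_\ell)$ are distinct paths of $\mathcal S(P)$ with $u_k,v_0$ combinatorially dependent; $x$ is the successor of $u_k$ in $P$, $y$ the predecessor of $v_0$, $z$ the successor of $v_\ell$; $P'$ is a tour whose edge multiset is that of $P$ with $\{u_k,x\},\{y,v_0\},\{v_\ell,z\}$ replaced by $\{u_k,v_0\},\{v_\ell,x\},\{y,z\}$. *)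

From HB Require Import structures.
From mathcomp Require Import all_boot all_order all_algebra.
Set Implicit Arguments. Unset Strict Implicit. Unset Printing Implicit Defensive.
Import Order.TTheory GRing.Theory Num.Theory.
Local Open Scope ring_scope.

Section Defs.
Variables (R : realFieldType) (X : finType) (H : {set X} -> R).

Definition dep (a b : X) : bool := H [set a; b] < H [set a] + H [set b].

Definition subadditive : Prop :=
  forall A B : {set X}, A != set0 -> B != set0 -> [disjoint A & B] ->
    H (A :|: B) <= H A + H B.

(* a tour: a directed cyclic sequence listing every element of X once;
   successor = next p, predecessor = prev p *)
Definition tour (p : seq X) : bool := perm_eq p (enum X).

(* q is a (simple) subpath of the tour p all of whose edges have
   combinatorially dependent endpoints, i.e. a path of P minus the
   deleted (independent) edges *)
Definition seg (p q : seq X) : bool :=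
  if q is a :: s then
    uniq q && path (fun b c => (c == next p b) && dep b c) a s
  else false.

Definition maxseg (p q : seq X) : bool :=
  if q is a :: s then
    [&& seg p q, ~~ seg p (prev p a :: q) & ~~ seg p (rcons q (next p (last a s)))]
  else false.

Definition Sset (p : seq X) : {set {set X}} :=
  [set [set x in traject (next p) vm.1 (nat_of_ord vm.2).+1]
     | vm : X * 'I_#|X| & maxseg p (traject (next p) vm.1 (nat_of_ord vm.2).+1)].

Definition calH (p : seq X) : R := \sum_(B in Sset p) H B.

Definition edges (p : seq X) : seq {set X} := [seq [set a; next p a] | a <- p].

End Defs.

From HB Require Import structures.
From mathcomp Require Import all_boot all_order all_algebra.
From mathcomp Require Import zify.
Import Order.TTheory GRing.Theory Num.Theory.
Local Open Scope ring_scope.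
Set Implicit Arguments. Unset Strict Implicit. Unset Printing Implicit Defensive.

(* Two distinct maximal subpaths do not exhaust the tour, so they end at
   independent edges; hence the three edges removed by the transformation are
   independent and every dependent edge of P is still an edge of P'. So each
   path of S(P) lies inside a path of S(P'): the partition S(P') is coarser than
   S(P), and sub-additivity bounds the value of each block of S(P') by the sum
   over the blocks of S(P) it contains. *)

Section Subadditivity.
Variables (R : realFieldType) (T : finType) (H : {set T} -> R).
Hypothesis subH : subadditive H.

Lemma subadditive_cover (S : {set {set T}}) :
  trivIset S -> set0 \notin S -> S != set0 -> H (cover S) <= \sum_(B in S) H B.
Proof.
have [n] := ubnP #|S|; elim: n S => // n IH S ltSn tS S0 nzS.
have [B SB] := set0Pn _ nzS.
rewrite /cover (big_setD1 B SB) [X in _ <= X](big_setD1 B SB) /=.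
have [->|nzS'] := eqVneq (S :\ B) set0; first by rewrite !big_set0 setU0 addr0.
have nzB : B != set0 by apply: contraNneq S0 => <-.
have ltS'n : (#|S :\ B| < n)%N by move: ltSn; rewrite (cardsD1 B S) SB.
have tS' : trivIset (S :\ B) by apply: trivIsetS tS; apply: subsetDl.
have S'0 : set0 \notin S :\ B by apply: contra S0; rewrite inE => /andP[].
have nzC : \bigcup_(i in S :\ B) i != set0.
  have [B' S'B'] := set0Pn _ nzS'.
  have [y B'y] : exists y, y \in B'.
    by apply/set0Pn; apply: contraNneq S'0 => <-.
  by apply/set0Pn; exists y; apply/bigcupP; exists B'.
have djBC : [disjoint B & \bigcup_(i in S :\ B) i].
  apply: bigcup_disjoint => i; rewrite !inE => /andP[iB Si].
  by move/trivIsetP: tS; apply => //; rewrite eq_sym.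
apply: le_trans (subH nzB nzC djBC) _.
by rewrite lerD2l IH.
Qed.

Lemma sum_partition_coarsening (P Q : {set {set T}}) :
  partition P setT -> partition Q setT ->
  (forall B, B \in P -> {in B &, forall x y, pblock Q x = pblock Q y}) ->
  \sum_(C in Q) H C <= \sum_(B in P) H B.
Proof.
move=> /and3P[/eqP coverP tP P0] /and3P[/eqP coverQ tQ Q0] coarse.
pose g (B : {set T}) := if [pick x in B] is Some x then pblock Q x else set0.
have gE B x : B \in P -> x \in B -> g B = pblock Q x.
  move=> PB Bx; rewrite /g; case: pickP => [y By|/(_ x)]; last by rewrite Bx.
  exact: (coarse B PB y x By Bx).
have PpB x : pblock P x \in P by rewrite pblock_mem // coverP inE.
have gQ B : B \in P -> g B \in Q.
  move=> PB; have [x Bx] : exists x, x \in B.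
    by apply/set0Pn; apply: contraNneq P0 => <-.
  by rewrite (gE B x PB Bx) pblock_mem // coverQ inE.
rewrite (partition_big g (mem Q) gQ) /=; apply: ler_sum => C QC.
pose S := [set B in P | g B == C].
have gpblock x : x \in C -> g (pblock P x) = C.
  by move=> Cx; rewrite (gE _ x) ?mem_pblock ?coverP ?inE // (def_pblock tQ QC Cx).
have coverS : cover S = C.
  apply/setP => x; apply/bigcupP/idP => [[B]|Cx].
    by rewrite inE => /andP[PB /eqP <-] Bx; rewrite (gE B x) // mem_pblock coverQ.
  by exists (pblock P x); [rewrite inE PpB gpblock ?eqxx | rewrite mem_pblock coverP].
have nzS : S != set0.
  have [x Cx] : exists x, x \in C by apply/set0Pn; apply: contraNneq Q0 => <-.
  by apply/set0Pn; exists (pblock P x); rewrite inE PpB gpblock ?eqxx.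
have tS : trivIset S.
  by apply: trivIsetS tP; apply/subsetP => B; rewrite inE => /andP[].
have S0 : set0 \notin S by apply: contra P0; rewrite inE => /andP[].
rewrite (eq_bigl (fun B => B \in S)) => [|B]; last by rewrite inE.
by rewrite -{1}coverS subadditive_cover.
Qed.

End Subadditivity.

Lemma set2_eq (T : finType) (a b c d : T) :
  [set a; b] = [set c; d] -> (a = c /\ b = d) \/ (a = d /\ b = c).
Proof.
move=> E; have mem_ab z : (z \in [set a; b]) = (z \in [set c; d]) by rewrite E.
have /set2P[ac|ad] : a \in [set c; d] by rewrite -mem_ab set21.
all: subst.
- left; split=> //; have /set2P[bc|//] : b \in [set c; d] by rewrite -mem_ab set22.
  by subst; have /set2P[] : d \in [set c; c] by rewrite mem_ab set22.
- right; split=> //; have /set2P[//|bd] : b \in [set c; d] by rewrite -mem_ab set22.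
  by subst; have /set2P[] : c \in [set d; d] by rewrite mem_ab set21.
Qed.

Lemma dep_set2 (R : realFieldType) (T : finType) (H : {set T} -> R) (a b c d : T) :
  [set a; b] = [set c; d] -> dep H a b = dep H c d.
Proof. by move=> E; rewrite /dep E; case: (set2_eq E) => -[-> ->]; rewrite // addrC. Qed.

Section Tour.
Variables (R : realFieldType) (X : finType) (H : {set X} -> R) (p : seq X).
Hypothesis tour_p : tour p.

Local Notation f := (next p).
Local Notation seg := (seg H p).
Local Notation maxseg := (maxseg H p).

Lemma tour_uniq : uniq p. Proof. by rewrite (perm_uniq tour_p) enum_uniq. Qed.

Lemma mem_tour x : x \in p. Proof. by rewrite (perm_mem tour_p) mem_enum. Qed.

Lemma order_next_tour a : order f a = #|X|.
Proof.
rewrite (order_cycle (cycle_next tour_uniq) tour_uniq (mem_tour a)).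
by rewrite (perm_size tour_p) cardE.
Qed.

Lemma traject_next_uniq a : uniq (traject f a #|X|).
Proof. by have := orbit_uniq f a; rewrite /orbit order_next_tour. Qed.

Lemma mem_traject_next a y : y \in traject f a #|X|.
Proof.
rewrite -(order_next_tour a) -fconnect_orbit.
by rewrite (fconnect_cycle (cycle_next tour_uniq) (mem_tour a)) mem_tour.
Qed.

Lemma iter_next_inj_lt a i j :
  (i < #|X|)%N -> (j < #|X|)%N -> iter i f a = iter j f a -> i = j.
Proof.
move=> ltiX ltjX e; apply/eqP.
rewrite -(nth_uniq a _ _ (traject_next_uniq a)) ?size_traject //.
by rewrite !nth_traject // e.
Qed.

Lemma iter_next_inj k : injective (iter k f).
Proof.
by elim: k => [|k IH] x y //= /(can_inj (prev_next tour_uniq)) /IH.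
Qed.

Lemma segE a s :
  seg (a :: s) = uniq (a :: s) && path (fun b c => (c == f b) && dep H b c) a s.
Proof. by []. Qed.

Lemma seg_traject q : seg q -> exists a k, q = traject f a k.+1.
Proof.
case: q => // a s /andP[_ dpath]; exists a, (size s).
suff fpath_s : fpath f a s by rewrite {1}(fpathE fpath_s).
by apply: sub_path dpath => x y /andP[/eqP -> _] /=.
Qed.

Lemma seg_dep_iter a k i :
  seg (traject f a k.+1) -> (i < k)%N -> dep H (iter i f a) (f (iter i f a)).
Proof.
case/andP=> _ /=; elim: k a i => [|k IH] a [|i] //= /andP[/andP[_ d] dpath] lt_ik.
  exact: d.
by rewrite -iterS iterSr; apply: IH.
Qed.

Lemma seg_size_lt a k : seg (traject f a k.+1) -> (k < #|X|)%N.
Proof.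
case/andP=> uniq_q _; have := max_card (mem (traject f a k.+1)).
by rewrite (card_uniqP uniq_q) size_traject.
Qed.

Lemma maxseg_seg q : maxseg q -> seg q.
Proof. by case: q => // a s /and3P[]. Qed.

Lemma maxseg_next_closed a k y :
  maxseg (traject f a k.+1) -> y \in traject f a k.+1 ->
  dep H y (f y) -> f y \in traject f a k.+1.
Proof.
move=> /and3P[/andP[uniq_q dpath] _ no_ext] /trajectP[i le_ik ->] d.
have [lt_ik|le_ki] := ltnP i k; first by apply/trajectP; exists i.+1.
have eq_ik : i = k by lia.
subst i.
apply: contraNT no_ext => notin; rewrite last_traject.
rewrite rcons_cons segE -rcons_cons rcons_uniq notin uniq_q rcons_path dpath.
by rewrite last_traject eqxx d.
Qed.

Lemma maxseg_prev_closed a k :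
  maxseg (traject f a k.+1) -> dep H (prev p a) a -> prev p a \in traject f a k.+1.
Proof.
move=> /and3P[/andP[uniq_q dpath] no_ext _] d; apply: contraNT no_ext => notin.
by rewrite segE cons_uniq notin uniq_q /= (next_prev tour_uniq) eqxx d.
Qed.

(* A maximal subpath through all of X may have dependent ends (the tour can be
   a single dependent cycle), so its end edges are independent only when it is
   proper. *)
Section ProperMaxseg.
Variables (a : X) (k : nat).
Hypotheses (proper : (k.+1 < #|X|)%N) (maxseg_a : maxseg (traject f a k.+1)).

Lemma maxseg_indep_prev : ~~ dep H (prev p a) a.
Proof.
apply/negP => /(maxseg_prev_closed maxseg_a) /trajectP[t le_tk e].
have e0 : iter t.+1 f a = iter 0 f a by rewrite iterS -e (next_prev tour_uniq).
by have := iter_next_inj_lt _ _ e0; lia.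
Qed.

Lemma maxseg_indep_last : ~~ dep H (iter k f a) (f (iter k f a)).
Proof.
apply/negP => d.
have /trajectP[t le_tk e] : f (iter k f a) \in traject f a k.+1.
  by apply: maxseg_next_closed d => //; apply/trajectP; exists k.
have e0 : iter k.+1 f a = iter t f a by rewrite iterS e.
by have := iter_next_inj_lt _ _ e0; lia.
Qed.

Lemma maxseg_head_eq b m i j :
  seg (traject f b m.+1) -> (i <= j <= m)%N -> iter i f a = iter j f b -> a = b.
Proof.
move=> seg_b /andP[le_ij le_jm].
rewrite -(subnKC le_ij) iterD => /iter_next_inj eq_a.
case E: (j - i)%N eq_a => [//|d] eq_a; case/negP: maxseg_indep_prev.
by rewrite eq_a iterS (prev_next tour_uniq) (seg_dep_iter seg_b); lia.
Qed.

Lemma maxseg_size_max m : seg (traject f a m.+1) -> (m <= k)%N.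
Proof.
move=> seg_a; rewrite leqNgt; apply/negP => lt_km.
by case/negP: maxseg_indep_last; apply: seg_dep_iter seg_a lt_km.
Qed.

End ProperMaxseg.

Lemma full_seg_maxseg_full a k b m :
  k.+1 = #|X| -> seg (traject f a k.+1) -> maxseg (traject f b m.+1) ->
  (#|X| <= m.+1)%N.
Proof.
move=> full seg_a maxseg_b; rewrite leqNgt; apply/negP => proper.
have /trajectP[s lt_sX eq_b] := mem_traject_next a b; subst b.
case: s lt_sX maxseg_b proper => [|s] lt_sX maxseg_b proper.
  by case/negP: (maxseg_indep_last proper maxseg_b); apply: seg_dep_iter seg_a _; lia.
case/negP: (maxseg_indep_prev proper maxseg_b).
by rewrite iterS (prev_next tour_uniq) (seg_dep_iter seg_a); lia.
Qed.

Lemma maxseg_meet_eq a k b m x :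
  maxseg (traject f a k.+1) -> maxseg (traject f b m.+1) ->
  x \in traject f a k.+1 -> x \in traject f b m.+1 ->
  [set y in traject f a k.+1] = [set y in traject f b m.+1].
Proof.
move=> maxseg_a maxseg_b xa xb.
have seg_a := maxseg_seg maxseg_a; have seg_b := maxseg_seg maxseg_b.
have lt_kX := seg_size_lt seg_a; have lt_mX := seg_size_lt seg_b.
have [full_a|proper_a] : k.+1 = #|X| \/ (k.+1 < #|X|)%N by lia.
  have le_Xm := full_seg_maxseg_full full_a seg_a maxseg_b.
  by apply/setP => y; rewrite !in_set full_a (_ : m.+1 = #|X|) ?mem_traject_next; lia.
have [full_b|proper_b] : m.+1 = #|X| \/ (m.+1 < #|X|)%N by lia.
  by have := full_seg_maxseg_full full_b seg_b maxseg_a; lia.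
move/trajectP: xa xb => [i le_ik ->] /trajectP[j le_jm e].
have eq_ab : a = b.
  have [le_ij|lt_ji] := leqP i j.
    by apply: (maxseg_head_eq proper_a maxseg_a seg_b _ e); lia.
  by apply/esym/(maxseg_head_eq proper_b maxseg_b seg_a _ (esym e)); lia.
subst b; have le_mk := maxseg_size_max proper_a maxseg_a seg_b.
by rewrite (_ : m = k) //; have := maxseg_size_max proper_b maxseg_b seg_a; lia.
Qed.

Lemma maxseg_distinct_proper a k b m :
  maxseg (traject f a k.+1) -> maxseg (traject f b m.+1) ->
  [set y in traject f a k.+1] != [set y in traject f b m.+1] -> (k.+1 < #|X|)%N.
Proof.
move=> maxseg_a maxseg_b; apply: contraNT; rewrite -leqNgt => le_Xk; apply/eqP.
apply: (maxseg_meet_eq maxseg_a maxseg_b (x := b)); last exact: mem_head.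
have lt_kX := seg_size_lt (maxseg_seg maxseg_a).
by rewrite (_ : k.+1 = #|X|) ?mem_traject_next //; apply/anti_leq/andP.
Qed.

Lemma SsetP B :
  reflect (exists a k, maxseg (traject f a k.+1) /\ B = [set y in traject f a k.+1])
          (B \in Sset H p).
Proof.
apply: (iffP imsetP) => [[[a k]]|[a [k [maxseg_a ->]]]].
  by rewrite inE /= => ? ->; exists a, k.
by exists (a, Ordinal (seg_size_lt (maxseg_seg maxseg_a))); rewrite ?inE.
Qed.

(* Choose a subpath through [x] of maximal length; it cannot be extended. *)
Lemma exists_maxseg_mem x :
  exists a k, maxseg (traject f a k.+1) /\ x \in traject f a k.+1.
Proof.
pose P m := [exists v, seg (traject f v m.+1) && (x \in traject f v m.+1)].
have P0 : exists m, P m by exists 0%N; apply/existsP; exists x; rewrite /= mem_head.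
have ubP m : P m -> (m <= #|X|)%N.
  by case/existsP=> v /andP[/seg_size_lt]; lia.
case: (ex_maxnP P0 ubP) => m /existsP[v /andP[seg_v xv]] maxP.
have not_longer w : seg (traject f w m.+2) -> x \in traject f w m.+2 -> False.
  move=> seg_w xw; suff /maxP : P m.+1 by rewrite ltnn.
  by apply/existsP; exists w; rewrite seg_w xw.
exists v, m; split=> //; apply/and3P; split=> //; apply/negP => ext.
- apply: (not_longer (prev p v)).
    by rewrite [traject _ _ _]/= (next_prev tour_uniq).
  by rewrite [traject _ _ _]/= (next_prev tour_uniq) in_cons xv orbT.
- have e : traject f v m.+2 = rcons (traject f v m.+1) (f (last v (traject f (f v) m))).
    by rewrite last_traject trajectSr.
  by apply: (not_longer v); rewrite e // mem_rcons in_cons xv orbT.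
Qed.

Lemma Sset_partition : partition (Sset H p) setT.
Proof.
apply/and3P; split.
- apply/eqP/setP => x; rewrite inE; apply/bigcupP.
  have [a [k [maxseg_a xa]]] := exists_maxseg_mem x.
  by exists [set y in traject f a k.+1]; [apply/SsetP; exists a, k | rewrite inE].
- apply/trivIsetP => _ _ /SsetP[a [k [maxseg_a ->]]] /SsetP[b [m [maxseg_b ->]]] ne.
  rewrite -setI_eq0; apply/set0Pn => -[y]; rewrite !inE => /andP[ya yb].
  by move/eqP: ne; apply; apply: maxseg_meet_eq ya yb.
- by apply/SsetP => -[a [k [_ /setP/(_ a)]]]; rewrite in_set0 in_set mem_head.
Qed.

Lemma pblock_Sset_next y : dep H y (f y) -> pblock (Sset H p) (f y) = pblock (Sset H p) y.
Proof.
move=> d; have /and3P[_ tS _] := Sset_partition.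
have [a [k [maxseg_a ya]]] := exists_maxseg_mem y.
have SB : [set z in traject f a k.+1] \in Sset H p by apply/SsetP; exists a, k.
have fya := maxseg_next_closed maxseg_a ya d.
by rewrite !(def_pblock tS SB) ?inE.
Qed.

Lemma pblock_Sset_edge y z :
  [set y; z] \in edges p -> dep H y z -> pblock (Sset H p) y = pblock (Sset H p) z.
Proof.
case/mapP => w _ E d; have dw : dep H w (f w) by rewrite -(dep_set2 H E).
by have := pblock_Sset_next dw; case: (set2_eq E) => -[-> ->].
Qed.

End Tour.

Section TwoTours.
Variables (R : realFieldType) (X : finType) (H : {set X} -> R) (p p' : seq X).
Hypotheses (tour_p : tour p) (tour_p' : tour p').

Lemma calH_le_coarsening :
  subadditive H ->
  (forall y, dep H y (next p y) ->
     pblock (Sset H p') (next p y) = pblock (Sset H p') y) ->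
  calH H p' <= calH H p.
Proof.
move=> subH dep_same.
rewrite /calH; apply: (sum_partition_coarsening subH).
- exact: Sset_partition.
- exact: Sset_partition.
move=> _ /SsetP[a [k [maxseg_a ->]]] x y.
have block_a i : (i <= k)%N ->
    pblock (Sset H p') (iter i (next p) a) = pblock (Sset H p') a.
  elim: i => // i IH lt_ik.
  by rewrite iterS dep_same ?IH ?(ltnW lt_ik) // (seg_dep_iter (maxseg_seg maxseg_a)).
by rewrite !in_set => /trajectP[i le_ik ->] /trajectP[j le_jk ->]; rewrite !block_a.
Qed.

End TwoTours.

Theorem mainTheorem4 (R : realFieldType) (X : finType) (H : {set X} -> R)
    (p p' : seq X) (u0 : X) (s1 : seq X) (v0 : X) (s2 : seq X) :
  subadditive H ->
  tour p ->
  maxseg H p (u0 :: s1) ->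
  maxseg H p (v0 :: s2) ->
  [set x in u0 :: s1] != [set x in v0 :: s2] ->
  dep H (last u0 s1) v0 ->
  tour p' ->
  (exists rest : seq {set X},
     perm_eq (edges p)
       ([set last u0 s1; next p (last u0 s1)]
        :: [set prev p v0; v0]
        :: [set last v0 s2; next p (last v0 s2)] :: rest)
     /\ perm_eq (edges p')
       ([set last u0 s1; v0]
        :: [set last v0 s2; next p (last u0 s1)]
        :: [set prev p v0; next p (last v0 s2)] :: rest)) ->
  calH H p' <= calH H p.
Proof.
move=> subH tour_p maxseg_u maxseg_v neq_uv _ tour_p' [rest [Ep Ep']].
have [a [k [eu0 es1]]] := seg_traject (maxseg_seg maxseg_u); subst.
have [b [m [ev0 es2]]] := seg_traject (maxseg_seg maxseg_v); subst.
have proper_u := maxseg_distinct_proper tour_p maxseg_u maxseg_v neq_uv.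
have proper_v : (m.+1 < #|X|)%N.
  by apply: (maxseg_distinct_proper tour_p maxseg_v maxseg_u); rewrite eq_sym.
have indep_u := maxseg_indep_last tour_p proper_u maxseg_u.
have indep_vp := maxseg_indep_prev tour_p proper_v maxseg_v.
have indep_vl := maxseg_indep_last tour_p proper_v maxseg_v.
rewrite !last_traject in Ep Ep'.
apply: calH_le_coarsening => // y d.
have : [set y; next p y] \in edges p by apply: map_f; apply: mem_tour.
rewrite (perm_mem Ep) !inE => /or4P[/eqP E|/eqP E|/eqP E|rest_y].
- by rewrite -(dep_set2 H E) d in indep_u.
- by rewrite -(dep_set2 H E) d in indep_vp.
- by rewrite -(dep_set2 H E) d in indep_vl.
symmetry; apply: (pblock_Sset_edge tour_p' _ d).
by rewrite (perm_mem Ep') !inE rest_y !orbT.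
Qed.
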